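(* Let $\bar n\ge1$ and let $\theta_2>0$ satisfy $\sin(\theta_2\sqrt n)\neq0$ for all $n\in\{1,\dots,9\bar n+8\}$. With $\Phi$ the Kraus map $\Phi(\rho)=M_g\rho M_g^\dagger+M_e\rho M_e^\dagger+M_m\rho M_m^\dagger$ ($M_g,M_e,M_m$ as in the context), the subspace $\mathcal{H}_0^{9\bar n+8}$ is invariant under $M_g,M_e,M_m$, and for every density operator $\rho_0$ supported in $\mathcal{H}_0^{9\bar n+8}$ the sequence $\rho_{k+1}=\Phi(\rho_k)$ converges to a density operator $\rho_\infty$ supported on $\mathrm{span}\{|\bar n\rangle,|9\bar n+8\rangle\}$.
   Context: Let $\mathcal{H}$ be the Hilbert space with orthonormal (Fock) basis $\{|n\rangle\}_{n\in\mathbb{N}}$ ($\mathbb{N}$ includes $0$). Let $\mathbf{a}=\sum_{n\ge1}\sqrt{n}\,|n-1\rangle\langle n|$, $\mathbf{a}^\dagger$ its adjoint, $\mathbf{N}=\mathbf{a}^\dagger\mathbf{a}=\sum_n n|n\rangle\langle n|$, $\mathbf{I}$ the identity, and for $h:\mathbb{N}\to\mathbb{C}$ write $h(\mathbf{N})=\sum_n h(n)|n\rangle\langle n|$. Let $\mathcal{H}_{n_1}^{n_2}=\mathrm{span}\{|n_1\rangle,\dots,|n_2\rangle\}$. Fix $\theta_1=\pi/\sqrt{\bar n+1}$, $\theta_2>0$ and an arbitrary real phase $\varphi$. Define $M_g=\mathbf{a}^\dagger\,\big(1+\cos\tfrac{\theta_2\sqrt{\mathbf{N}}}{2}\big)\,\frac{\sin(\theta_1\sqrt{\mathbf{N}+\mathbf{I}})}{2\sqrt{\mathbf{N}+\mathbf{I}}}$,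 $M_e=\cos^2\tfrac{\theta_1\sqrt{\mathbf{N}+\mathbf{I}}}{2}\,\cos\tfrac{\theta_2\sqrt{\mathbf{N}}}{2}-\sin^2\tfrac{\theta_1\sqrt{\mathbf{N}+\mathbf{I}}}{2}$, $M_m=e^{i\varphi}\,\mathbf{a}\,\frac{\sin(\theta_2\sqrt{\mathbf{N}}/2)}{\sqrt{\mathbf{N}}}\,\cos\tfrac{\theta_1\sqrt{\mathbf{N}+\mathbf{I}}}{2}$ (the value at $n=0$ of $\sin(\theta_2\sqrt{n}/2)/\sqrt{n}$ is irrelevant). *)

From Stdlib Require Import Reals.
Open Scope R_scope.

Record C := mkC { Cre : R ; Cim : R }.
Definition C0 : C := mkC 0 0.
Definition C1 : C := mkC 1 0.
Definition RtoC (x : R) : C := mkC x 0.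
Definition Cadd (z w : C) : C := mkC (Cre z + Cre w) (Cim z + Cim w).
Definition Cmul (z w : C) : C :=
  mkC (Cre z * Cre w - Cim z * Cim w) (Cre z * Cim w + Cim z * Cre w).
Definition Cconj (z : C) : C := mkC (Cre z) (- Cim z).
Definition Cexpi (phi : R) : C := mkC (cos phi) (sin phi).

Fixpoint Csum (n : nat) (f : nat -> C) : C :=
  match n with
  | O => C0
  | S m => Cadd (Csum m f) (f m)
  end.

(** Operators on the Fock space are represented by their matrix elements
    [A i j = <i| A |j>] in the Fock basis {|n>}. *)
Definition Op := nat -> nat -> C.

Definition theta1 (nbar : nat) : R := PI / sqrt (INR nbar + 1).

(** Matrix elements of
    M_g = a^dag (1 + cos(theta2 sqrt N / 2)) sin(theta1 sqrt(N+1)) / (2 sqrt(N+1)).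
    Since a^dag |j> = sqrt(j+1) |j+1>, <i|M_g|j> is nonzero only for i = j+1. *)
Definition Mg (nbar : nat) (theta2 : R) : Op := fun i j =>
  if Nat.eqb i (S j) then
    RtoC (sqrt (INR j + 1)
          * ((1 + cos (theta2 * sqrt (INR j) / 2))
             * (sin (theta1 nbar * sqrt (INR j + 1)) / (2 * sqrt (INR j + 1)))))
  else C0.

Definition Me (nbar : nat) (theta2 : R) : Op := fun i j =>
  if Nat.eqb i j then
    RtoC ((cos (theta1 nbar * sqrt (INR j + 1) / 2)) ^ 2
            * cos (theta2 * sqrt (INR j) / 2)
          - (sin (theta1 nbar * sqrt (INR j + 1) / 2)) ^ 2)
  else C0.

(** M_m = e^{i phi} a (sin(theta2 sqrt N / 2)/sqrt N) cos(theta1 sqrt(N+1)/2).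
    Since a |j> = sqrt j |j-1>, <i|M_m|j> is nonzero only for j = i+1 (so j >= 1,
    and the irrelevant value at j = 0 never enters). *)
Definition Mm (nbar : nat) (theta2 phi : R) : Op := fun i j =>
  if Nat.eqb j (S i) then
    Cmul (Cexpi phi)
      (RtoC (sqrt (INR j)
             * ((sin (theta2 * sqrt (INR j) / 2) / sqrt (INR j))
                * cos (theta1 nbar * sqrt (INR j + 1) / 2))))
  else C0.

(** (A rho B^dag)_{ij} for rho supported in H_0^K (sums over k, l <= K). *)
Definition sandwich (K : nat) (A : Op) (rho : Op) : Op := fun i j =>
  Csum (S K) (fun k => Csum (S K) (fun l =>
    Cmul (A i k) (Cmul (rho k l) (Cconj (A j l))))).

Definition Phi (K nbar : nat) (theta2 phi : R) (rho : Op) : Op := fun i j =>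
  Cadd (Cadd (sandwich K (Mg nbar theta2) rho i j)
             (sandwich K (Me nbar theta2) rho i j))
       (sandwich K (Mm nbar theta2 phi) rho i j).

Definition invariant_sub (K : nat) (A : Op) : Prop :=
  forall i j, (j <= K)%nat -> (K < i)%nat -> A i j = C0.

Definition supported_in (K : nat) (rho : Op) : Prop :=
  forall i j, (K < i)%nat \/ (K < j)%nat -> rho i j = C0.

Definition density_on (K : nat) (rho : Op) : Prop :=
  supported_in K rho
  /\ (forall i j, rho j i = Cconj (rho i j))
  /\ (forall v : nat -> C,
        0 <= Cre (Csum (S K) (fun i => Csum (S K) (fun j =>
                   Cmul (Cconj (v i)) (Cmul (rho i j) (v j))))))
  /\ Csum (S K) (fun i => rho i i) = C1.

(** Entrywise convergence (equivalent to any norm convergence in finite dimension). *)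
Definition op_converges (rhos : nat -> Op) (rinf : Op) : Prop :=
  forall i j, Un_cv (fun k => Cre (rhos k i j)) (Cre (rinf i j))
           /\ Un_cv (fun k => Cim (rhos k i j)) (Cim (rinf i j)).

(** Let K = 9 nbar + 8.  In the Fock basis M_g maps |j> to g_j |j+1>, M_e is
    diagonal with entries e_j and M_m maps |j> to (phase) m_j |j-1>.  Kraus
    completeness g_j^2 + e_j^2 + m_j^2 = 1 together with g_K = 0 and m_0 = 0
    makes Phi map density operators on H_0^K to density operators.  Since
    e_nbar = e_K = -1, the populations of |nbar> and |K> are nondecreasing and
    bounded, hence converge; the telescoped growth of the former shows that the
    populations of |nbar-1> and |nbar+1> are summable in time, and as g_j <> 0
    (j < nbar) and m_j <> 0 (nbar < j < K) summability propagates to every other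
    level, whose population thus tends to 0.  Positivity bounds coherences by
    populations, so all coherences involving such a level vanish, while the
    coherence <nbar|rho|K> has summable increments and converges. *)

From Stdlib Require Import Reals Lra Lia Psatz.
(* Imported after Reals, whose binomial [C] would otherwise shadow the complex type. *)
Open Scope R_scope.

Lemma C_ext z w : Cre z = Cre w -> Cim z = Cim w -> z = w.
Proof. destruct z, w; simpl; intros; subst; reflexivity. Qed.

Ltac Cring := apply C_ext; simpl; ring.

Definition scale (r : R) (z : C) : C := mkC (r * Cre z) (r * Cim z).

Lemma Csum_ext n f g : (forall k, (k < n)%nat -> f k = g k) -> Csum n f = Csum n g.
Proof.
  induction n as [|n IH]; simpl; intros H; auto.
  rewrite IH by (intros; apply H; lia). rewrite H by lia. reflexivity.
Qed.

Lemma Csum_zero n f : (forall k, (k < n)%nat -> f k = C0) -> Csum n f = C0.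
Proof.
  induction n as [|n IH]; simpl; intros H; auto.
  rewrite IH by (intros; apply H; lia). rewrite H by lia. Cring.
Qed.

Lemma Csum_single n f k0 : (k0 < n)%nat ->
  (forall k, (k < n)%nat -> k <> k0 -> f k = C0) -> Csum n f = f k0.
Proof.
  induction n as [|n IH]; simpl; intros Hk H; [lia|].
  destruct (Nat.eq_dec k0 n) as [->|Hne].
  - rewrite Csum_zero by (intros; apply H; lia). Cring.
  - rewrite IH by (try lia; intros; apply H; lia). rewrite (H n) by lia. Cring.
Qed.

Lemma Csum_two n f i0 j0 : (i0 < n)%nat -> (j0 < n)%nat -> i0 <> j0 ->
  (forall k, (k < n)%nat -> k <> i0 -> k <> j0 -> f k = C0) ->
  Csum n f = Cadd (f i0) (f j0).
Proof.
  induction n as [|n IH]; simpl; intros Hi Hj Hij H; [lia|].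
  destruct (Nat.eq_dec i0 n) as [->|Hi'].
  - rewrite (Csum_single n f j0) by (try lia; intros; apply H; lia). Cring.
  - destruct (Nat.eq_dec j0 n) as [->|Hj'].
    + rewrite (Csum_single n f i0) by (try lia; intros; apply H; lia). Cring.
    + rewrite IH by (try lia; intros; apply H; lia). rewrite (H n) by lia. Cring.
Qed.

Lemma Csum_add n f g : Csum n (fun k => Cadd (f k) (g k)) = Cadd (Csum n f) (Csum n g).
Proof. induction n as [|n IH]; simpl; [Cring|]. rewrite IH. Cring. Qed.

Lemma Csum_mul_l n c f : Cmul c (Csum n f) = Csum n (fun k => Cmul c (f k)).
Proof. induction n as [|n IH]; simpl; [Cring|]. rewrite <- IH. Cring. Qed.

Lemma Csum_mul_r n c f : Cmul (Csum n f) c = Csum n (fun k => Cmul (f k) c).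
Proof. induction n as [|n IH]; simpl; [Cring|]. rewrite <- IH. Cring. Qed.

Lemma Csum_conj n f : Cconj (Csum n f) = Csum n (fun k => Cconj (f k)).
Proof. induction n as [|n IH]; simpl; [Cring|]. rewrite <- IH. Cring. Qed.

Lemma Csum_swap n m f :
  Csum n (fun i => Csum m (fun j => f i j)) = Csum m (fun j => Csum n (fun i => f i j)).
Proof.
  induction n as [|n IH]; simpl.
  - symmetry. apply Csum_zero. reflexivity.
  - rewrite IH. rewrite <- Csum_add. reflexivity.
Qed.

Lemma Csum_shift n f : Csum (S n) f = Cadd (f O) (Csum n (fun i => f (S i))).
Proof. induction n as [|n IH]; simpl in *; [Cring|]. rewrite IH. Cring. Qed.

Lemma Csum_swap4 n f :
  Csum n (fun i => Csum n (fun j => Csum n (fun k => Csum n (fun l => f i j k l)))) =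
  Csum n (fun k => Csum n (fun l => Csum n (fun i => Csum n (fun j => f i j k l)))).
Proof.
  transitivity (Csum n (fun i => Csum n (fun k => Csum n (fun j => Csum n (fun l => f i j k l))))).
  { apply Csum_ext; intros i _. apply Csum_swap. }
  rewrite Csum_swap. apply Csum_ext; intros k _.
  transitivity (Csum n (fun i => Csum n (fun l => Csum n (fun j => f i j k l)))).
  { apply Csum_ext; intros i _. apply Csum_swap. }
  apply Csum_swap.
Qed.

(** ** Positivity and hermiticity of operators on H_0^K *)

Definition quad (K : nat) (rho : Op) (v : nat -> C) : C :=
  Csum (S K) (fun i => Csum (S K) (fun j => Cmul (Cconj (v i)) (Cmul (rho i j) (v j)))).

Definition psd (K : nat) (rho : Op) : Prop := forall v, 0 <= Cre (quad K rho v).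

Definition hermitian (rho : Op) : Prop := forall i j, rho j i = Cconj (rho i j).

Lemma quad_add K X Y v :
  quad K (fun i j => Cadd (X i j) (Y i j)) v = Cadd (quad K X v) (quad K Y v).
Proof.
  unfold quad. rewrite <- Csum_add. apply Csum_ext; intros i _.
  rewrite <- Csum_add. apply Csum_ext; intros j _. Cring.
Qed.

Lemma quad_sandwich K A rho v :
  quad K (sandwich K A rho) v =
  quad K rho (fun l => Csum (S K) (fun j => Cmul (Cconj (A j l)) (v j))).
Proof.
  unfold quad, sandwich.
  transitivity (Csum (S K) (fun i => Csum (S K) (fun j => Csum (S K) (fun k => Csum (S K) (fun l =>
     Cmul (Cconj (v i)) (Cmul (Cmul (A i k) (Cmul (rho k l) (Cconj (A j l)))) (v j))))))).
  { apply Csum_ext; intros i _. apply Csum_ext; intros j _.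
    rewrite Csum_mul_r, Csum_mul_l. apply Csum_ext; intros k _.
    rewrite Csum_mul_r, Csum_mul_l. reflexivity. }
  rewrite Csum_swap4. apply Csum_ext; intros k _. apply Csum_ext; intros l _.
  rewrite Csum_conj, Csum_mul_l, Csum_mul_r. apply Csum_ext; intros i _.
  rewrite Csum_mul_l. apply Csum_ext; intros j _. Cring.
Qed.

Lemma psd_sandwich K A rho : psd K rho -> psd K (sandwich K A rho).
Proof. intros H v. rewrite quad_sandwich. apply H. Qed.

Lemma sandwich_hermitian K A rho : hermitian rho -> hermitian (sandwich K A rho).
Proof.
  intros H i j. unfold sandwich.
  rewrite Csum_swap, Csum_conj. apply Csum_ext; intros k _.
  rewrite Csum_conj. apply Csum_ext; intros l _.
  rewrite (H k l). Cring.
Qed.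

Section DensityOperator.
Variables (K : nat) (rho : Op).
Hypothesis Hrho : density_on K rho.

Lemma density_supported : supported_in K rho.
Proof. exact (proj1 Hrho). Qed.

Lemma density_hermitian : hermitian rho.
Proof. exact (proj1 (proj2 Hrho)). Qed.

Lemma density_psd : psd K rho.
Proof. exact (proj1 (proj2 (proj2 Hrho))). Qed.

Lemma density_diag_real i : Cim (rho i i) = 0.
Proof. pose proof (density_hermitian i i) as H. apply (f_equal Cim) in H. simpl in H. lra. Qed.

Definition two_vec (i j : nat) (x y : C) : nat -> C :=
  fun k => if Nat.eqb k i then x else if Nat.eqb k j then y else C0.

Lemma quad_two_vec i j x y : i <> j -> (i <= K)%nat -> (j <= K)%nat ->
  quad K rho (two_vec i j x y) =
  Cadd (Cadd (Cmul (Cconj x) (Cmul (rho i i) x)) (Cmul (Cconj x) (Cmul (rho i j) y)))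
       (Cadd (Cmul (Cconj y) (Cmul (rho j i) x)) (Cmul (Cconj y) (Cmul (rho j j) y))).
Proof.
  intros Hij Hi Hj. unfold quad.
  assert (Vi : two_vec i j x y i = x) by (unfold two_vec; rewrite Nat.eqb_refl; auto).
  assert (Vj : two_vec i j x y j = y)
    by (unfold two_vec; rewrite Nat.eqb_refl; destruct (Nat.eqb_spec j i); [lia|auto]).
  assert (V0 : forall k, k <> i -> k <> j -> two_vec i j x y k = C0)
    by (intros k H1 H2; unfold two_vec;
        destruct (Nat.eqb_spec k i); destruct (Nat.eqb_spec k j); auto; lia).
  rewrite (Csum_two _ _ i j)
    by (try lia; intros k _ H1 H2; apply Csum_zero; intros l _; rewrite V0 by auto; Cring).
  rewrite !(Csum_two _ _ i j) by (try lia; intros k _ H1 H2; rewrite (V0 k) by auto; Cring).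
  rewrite Vi, Vj. reflexivity.
Qed.

Lemma density_diag_nonneg i : 0 <= Cre (rho i i).
Proof.
  destruct (Compare_dec.le_lt_dec i K) as [Hi|Hi].
  - pose proof (density_psd (fun k => if Nat.eqb k i then C1 else C0)) as H.
    unfold quad in H.
    rewrite (Csum_single _ _ i) in H by (try lia; intros k _ Hk; apply Csum_zero; intros l _;
      apply Nat.eqb_neq in Hk; rewrite Hk; Cring).
    rewrite (Csum_single _ _ i) in H by (try lia; intros k _ Hk;
      apply Nat.eqb_neq in Hk; rewrite Hk; Cring).
    rewrite Nat.eqb_refl in H. simpl in H. lra.
  - rewrite density_supported by lia. simpl. lra.
Qed.

Lemma Csum_re_nonneg n f : (forall k, (k < n)%nat -> 0 <= Cre (f k)) -> 0 <= Cre (Csum n f).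
Proof.
  induction n as [|n IH]; intros H; simpl; [lra|].
  pose proof (H n ltac:(lia)). pose proof (IH (fun k Hk => H k ltac:(lia))). lra.
Qed.

Lemma Csum_re_ge n f i : (forall k, (k < n)%nat -> 0 <= Cre (f k)) -> (i < n)%nat ->
  Cre (f i) <= Cre (Csum n f).
Proof.
  induction n as [|n IH]; intros H Hi; [lia|]. simpl.
  pose proof (Csum_re_nonneg n f (fun k Hk => H k ltac:(lia))).
  destruct (Nat.eq_dec i n) as [->|Hne].
  - lra.
  - pose proof (IH (fun k Hk => H k ltac:(lia)) ltac:(lia)). pose proof (H n ltac:(lia)). lra.
Qed.

Lemma density_diag_le1 i : Cre (rho i i) <= 1.
Proof.
  destruct (Compare_dec.le_lt_dec i K) as [Hi|Hi].
  - pose proof (Csum_re_ge (S K) (fun i => rho i i) i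
                  (fun k _ => density_diag_nonneg k) ltac:(lia)) as H.
    destruct Hrho as (_ & _ & _ & Htr). rewrite Htr in H. simpl in H. lra.
  - rewrite density_supported by lia. simpl. lra.
Qed.

(** Positivity of the 2x2 block bounds coherences by populations:
    2 |rho_ij| <= s rho_ii + rho_jj / s for every s > 0 (componentwise). *)
Lemma density_coherence_bound i j s : i <> j -> 0 < s ->
  2 * Rabs (Cre (rho i j)) <= s * Cre (rho i i) + Cre (rho j j) / s /\
  2 * Rabs (Cim (rho i j)) <= s * Cre (rho i i) + Cre (rho j j) / s.
Proof.
  intros Hij Hs.
  pose proof (density_diag_nonneg i). pose proof (density_diag_nonneg j).
  assert (0 <= Cre (rho j j) / s) by (unfold Rdiv; pose proof (Rinv_0_lt_compat s Hs); nra).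
  destruct (Compare_dec.le_lt_dec i K) as [Hi|Hi];
  [destruct (Compare_dec.le_lt_dec j K) as [Hj|Hj]|].
  2,3: rewrite density_supported by lia; simpl; rewrite Rabs_R0; nra.
  assert (Q : forall x y, 0 <= Cre (Cadd
     (Cadd (Cmul (Cconj x) (Cmul (rho i i) x)) (Cmul (Cconj x) (Cmul (rho i j) y)))
     (Cadd (Cmul (Cconj y) (Cmul (rho j i) x)) (Cmul (Cconj y) (Cmul (rho j j) y))))).
  { intros x y. rewrite <- quad_two_vec by auto. apply density_psd. }
  rewrite (density_hermitian i j) in Q.
  pose proof (density_diag_real i) as Ii. pose proof (density_diag_real j) as Ij.
  destruct (rho i i) as [a a'] eqn:Ea. destruct (rho j j) as [b b'] eqn:Eb.
  destruct (rho i j) as [c c'] eqn:Ec. simpl in *. subst a' b'.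
  pose proof (Q (RtoC s) (RtoC 1)) as Q1. pose proof (Q (RtoC s) (RtoC (-1))) as Q2.
  pose proof (Q (RtoC s) (mkC 0 1)) as Q3. pose proof (Q (RtoC s) (mkC 0 (-1))) as Q4.
  simpl in Q1, Q2, Q3, Q4.
  assert (Hdiv : forall z, 2 * s * z <= s * s * a + b -> 2 * z <= s * a + b / s).
  { intros z Hz. apply (Rmult_le_reg_l s); [lra|].
    replace (s * (s * a + b / s)) with (s * s * a + b) by (field; lra). lra. }
  split; unfold Rabs; destruct (Rcase_abs _); apply Hdiv; nra.
Qed.

End DensityOperator.

Lemma Un_cv_const c : Un_cv (fun _ => c) c.
Proof. intros eps He. exists O. intros. unfold Rdist. rewrite Rminus_diag, Rabs_R0. auto. Qed.

Definition Ccv (z : nat -> C) (w : C) : Prop :=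
  Un_cv (fun k => Cre (z k)) (Cre w) /\ Un_cv (fun k => Cim (z k)) (Cim w).

Lemma Ccv_ext z z' w : (forall k, z k = z' k) -> Ccv z w -> Ccv z' w.
Proof. intros E [H1 H2]. split; eapply Un_cv_ext; eauto; intros; simpl; rewrite E; auto. Qed.

Lemma Ccv_const c : Ccv (fun _ => c) c.
Proof. split; apply Un_cv_const. Qed.

Lemma Ccv_add z1 z2 w1 w2 :
  Ccv z1 w1 -> Ccv z2 w2 -> Ccv (fun k => Cadd (z1 k) (z2 k)) (Cadd w1 w2).
Proof. intros [A1 A2] [B1 B2]. split; simpl; apply CV_plus; auto. Qed.

Lemma Ccv_mul z1 z2 w1 w2 :
  Ccv z1 w1 -> Ccv z2 w2 -> Ccv (fun k => Cmul (z1 k) (z2 k)) (Cmul w1 w2).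
Proof.
  intros [A1 A2] [B1 B2]. split; simpl.
  - apply CV_minus; apply CV_mult; auto.
  - apply CV_plus; apply CV_mult; auto.
Qed.

Lemma Ccv_conj z w : Ccv z w -> Ccv (fun k => Cconj (z k)) (Cconj w).
Proof.
  intros [A1 A2]. split; simpl; auto.
  apply (Un_cv_ext (opp_seq (fun k => Cim (z k)))); [intros; reflexivity|].
  apply CV_opp; auto.
Qed.

Lemma Ccv_Csum m (f : nat -> nat -> C) g :
  (forall i, Ccv (fun k => f k i) (g i)) -> Ccv (fun k => Csum m (f k)) (Csum m g).
Proof.
  intros H. induction m as [|m IH]; simpl.
  - apply Ccv_const.
  - apply Ccv_add; auto.
Qed.

Lemma Ccv_unique z w1 w2 : Ccv z w1 -> Ccv z w2 -> w1 = w2.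
Proof. intros [A1 A2] [B1 B2]. apply C_ext; eapply UL_sequence; eauto. Qed.

Lemma density_on_limit K (rhos : nat -> Op) (r : Op) :
  (forall k, density_on K (rhos k)) -> (forall i j, Ccv (fun k => rhos k i j) (r i j)) ->
  density_on K r.
Proof.
  intros D Hcv. split; [|split; [|split]].
  - intros i j Hij. apply (Ccv_unique (fun k => rhos k i j)); auto.
    eapply Ccv_ext; [|apply Ccv_const]. intros k. symmetry. apply (density_supported K _ (D k)). auto.
  - intros i j. apply (Ccv_unique (fun k => rhos k j i)); auto.
    eapply Ccv_ext; [|apply Ccv_conj; apply Hcv]. intros k. symmetry.
    apply (density_hermitian K _ (D k)).
  - intros v.
    assert (Hq : Ccv (fun k => quad K (rhos k) v) (quad K r v)).
    { unfold quad. apply Ccv_Csum. intros i. apply Ccv_Csum. intros j.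
      apply Ccv_mul; [apply Ccv_const|]. apply Ccv_mul; [apply Hcv|apply Ccv_const]. }
    eapply Rle_cv_lim; [|apply Un_cv_const|apply Hq].
    intros k. apply (density_psd K _ (D k)).
  - apply (Ccv_unique (fun k => Csum (S K) (fun i => rhos k i i))).
    + apply Ccv_Csum. intros i. apply Hcv.
    + eapply Ccv_ext; [|apply Ccv_const]. intros k. symmetry. apply (D k).
Qed.

(** ** Summable nonnegative sequences *)

Fixpoint psum (N : nat) (u : nat -> R) : R :=
  match N with O => 0 | S m => psum m u + u m end.

Lemma psum_le N u v : (forall k, u k <= v k) -> psum N u <= psum N v.
Proof. induction N as [|N IH]; simpl; intros H; [lra|]. specialize (IH H). specialize (H N). lra. Qed.

Lemma psum_nonneg N u : (forall k, 0 <= u k) -> 0 <= psum N u.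
Proof. induction N as [|N IH]; simpl; intros H; [lra|]. specialize (IH H). specialize (H N). lra. Qed.

Lemma psum_lin N a b u v : psum N (fun k => a * u k + b * v k) = a * psum N u + b * psum N v.
Proof. induction N as [|N IH]; simpl; [ring|]. rewrite IH. ring. Qed.

Lemma psum_shift N u : psum (S N) u = u O + psum N (fun k => u (S k)).
Proof. induction N as [|N IH]; simpl in *; [ring|]. rewrite IH. ring. Qed.

Definition summable (u : nat -> R) : Prop := exists B, forall N, psum N u <= B.

(** If c u_k <= w_(k+1) with c > 0 and w summable, then u is summable:
    summability propagates one step back in time along a positive rate. *)
Lemma summable_transfer u w c : 0 < c -> (forall k, 0 <= w k) ->
  (forall k, c * u k <= w (S k)) -> summable w -> summable u.
Proof.
  intros Hc Hw Hu [B HB]. exists (B / c). intros N.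
  apply (Rmult_le_reg_l c); [lra|]. replace (c * (B / c)) with B by (field; lra).
  replace (c * psum N u) with (psum N (fun k => c * u k + 0 * u k)) by (rewrite psum_lin; ring).
  eapply Rle_trans; [apply (psum_le N _ (fun k => w (S k))); intros k; specialize (Hu k); lra|].
  pose proof (HB (S N)) as HBN. rewrite psum_shift in HBN. pose proof (Hw O). lra.
Qed.

Lemma summable_comb a b u v : 0 <= a -> 0 <= b ->
  summable u -> summable v -> summable (fun k => a * u k + b * v k).
Proof.
  intros Ha Hb [B1 H1] [B2 H2]. exists (a * B1 + b * B2). intros N.
  rewrite psum_lin. specialize (H1 N). specialize (H2 N). nra.
Qed.

Lemma summable_cv0 u : (forall k, 0 <= u k) -> summable u -> Un_cv u 0.
Proof.
  intros Hu [B HB].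
  destruct (growing_cv (fun N => psum N u)) as [l Hl].
  - intros N. simpl. specialize (Hu N). lra.
  - exists B. intros x [i ->]. auto.
  - assert (H1 : Un_cv (fun N => psum (S N) u) l).
    { apply (Un_cv_ext (fun N => psum (N + 1) u)). intros; f_equal; lia.
      apply (CV_shift' (fun N => psum N u) 1 l). auto. }
    pose proof (CV_minus _ _ _ _ H1 Hl) as H2.
    replace 0 with (l - l) by ring. eapply Un_cv_ext; [|exact H2]. intros k; simpl; ring.
Qed.

Lemma dominated_increments_cv x u w g :
  (forall k, x (S k) = x k + g * u k) -> (forall k, Rabs (u k) <= w k) ->
  summable w -> exists l, Un_cv x l.
Proof.
  intros Hx Hu [B HB].
  assert (Hw : forall k, 0 <= w k)
    by (intros k; pose proof (Hu k); pose proof (Rabs_pos (u k)); lra).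
  assert (Hinc : forall k, Rabs (g * u k) <= Rabs g * w k).
  { intros k. rewrite Rabs_mult. apply Rmult_le_compat_l; [apply Rabs_pos|apply Hu]. }
  destruct (growing_cv (fun N => psum N w)) as [lw Hlw].
  { intros N. simpl. specialize (Hw N). lra. }
  { exists B. intros z [i ->]. auto. }
  destruct (growing_cv (fun k => x k + Rabs g * psum k w)) as [ly Hly].
  { intros k. simpl. rewrite Hx. pose proof (Hinc k).
    pose proof (Rle_abs (- (g * u k))). rewrite Rabs_Ropp in *. lra. }
  { exists (x O + 2 * Rabs g * B). intros z [i ->].
    assert (Hb : x i <= x O + Rabs g * psum i w).
    { induction i as [|i IH]; simpl; [lra|]. rewrite Hx.
      pose proof (Hinc i). pose proof (Rle_abs (g * u i)). lra. }
    pose proof (HB i). pose proof (Rabs_pos g). nra. }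
  exists (ly - Rabs g * lw).
  eapply Un_cv_ext; [|apply (CV_minus _ _ _ _ Hly (CV_mult (fun _ => Rabs g) _ _ _ (Un_cv_const _) Hlw))].
  intros k; simpl; ring.
Qed.

Lemma squeeze_by_vanishing x q : Un_cv q 0 ->
  (forall k s, 0 < s -> 2 * Rabs (x k) <= s * q k + / s) -> Un_cv x 0.
Proof.
  intros Hq Hx eps He.
  destruct (Hq (eps * eps / 4)) as [N HN]. { nra. }
  exists N. intros k Hk. specialize (HN k Hk). unfold Rdist in *. rewrite Rminus_0_r in *.
  specialize (Hx k (2 / eps) ltac:(apply Rdiv_lt_0_compat; lra)).
  assert (q k < eps * eps / 4) by (pose proof (Rle_abs (q k)); lra).
  replace (/ (2 / eps)) with (eps / 2) in Hx by (field; lra).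
  assert (2 / eps * q k <= 2 / eps * (eps * eps / 4)).
  { apply Rmult_le_compat_l; [left; apply Rdiv_lt_0_compat; lra | lra]. }
  replace (2 / eps * (eps * eps / 4)) with (eps / 2) in H0 by (field; lra).
  lra.
Qed.

(** ** The Kraus amplitudes *)

(** <j+1|M_g|j>, <j|M_e|j> and |<j-1|M_m|j>|, as in [Mg], [Me], [Mm]. *)
Definition g_amp (n : nat) (t : R) (j : nat) : R :=
  sqrt (INR j + 1) * ((1 + cos (t * sqrt (INR j) / 2))
     * (sin (theta1 n * sqrt (INR j + 1)) / (2 * sqrt (INR j + 1)))).
Definition e_amp (n : nat) (t : R) (j : nat) : R :=
  (cos (theta1 n * sqrt (INR j + 1) / 2)) ^ 2 * cos (t * sqrt (INR j) / 2)
  - (sin (theta1 n * sqrt (INR j + 1) / 2)) ^ 2.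
Definition m_amp (n : nat) (t : R) (j : nat) : R :=
  sqrt (INR j) * ((sin (t * sqrt (INR j) / 2) / sqrt (INR j))
     * cos (theta1 n * sqrt (INR j + 1) / 2)).

(** The index of the upper level of the attractor. *)
Notation Ktop n := (9 * n + 8)%nat.

Definition sin_condition (n : nat) (t : R) : Prop :=
  forall m : nat, (1 <= m <= Ktop n)%nat -> sin (t * sqrt (INR m)) <> 0.

Lemma sqrt_succ_pos j : 0 < sqrt (INR j + 1).
Proof. apply sqrt_lt_R0. pose proof (pos_INR j). lra. Qed.

Lemma theta1_mul n x : theta1 n * x = PI * (x / sqrt (INR n + 1)).
Proof. unfold theta1. pose proof (sqrt_succ_pos n). field. lra. Qed.

(** theta1 sqrt(nbar+1) = pi and, as K+1 = 9(nbar+1), theta1 sqrt(K+1) = 3 pi. *)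
Lemma theta1_nbar n : theta1 n * sqrt (INR n + 1) = PI.
Proof. rewrite theta1_mul. pose proof (sqrt_succ_pos n). field. lra. Qed.

Lemma sqrt_top n : sqrt (INR (Ktop n) + 1) = 3 * sqrt (INR n + 1).
Proof.
  replace (INR (Ktop n) + 1) with (3 * 3 * (INR n + 1))
    by (rewrite plus_INR, mult_INR; simpl; ring).
  pose proof (pos_INR n).
  rewrite sqrt_mult, sqrt_square by lra. reflexivity.
Qed.

Lemma theta1_top n : theta1 n * sqrt (INR (Ktop n) + 1) = 3 * PI.
Proof. rewrite sqrt_top, theta1_mul. pose proof (sqrt_succ_pos n). field. lra. Qed.

Lemma g_amp_simpl n t j :
  g_amp n t j = (1 + cos (t * sqrt (INR j) / 2)) * sin (theta1 n * sqrt (INR j + 1)) / 2.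
Proof. unfold g_amp. pose proof (sqrt_succ_pos j). field. lra. Qed.

Lemma m_amp_simpl n t j :
  m_amp n t j = sin (t * sqrt (INR j) / 2) * cos (theta1 n * sqrt (INR j + 1) / 2).
Proof.
  unfold m_amp. destruct j as [|j].
  - simpl INR. rewrite sqrt_0. replace (t * 0 / 2) with 0 by field. rewrite sin_0. ring.
  - assert (0 < sqrt (INR (S j))) by (apply sqrt_lt_R0; apply lt_0_INR; lia).
    field. lra.
Qed.

(** M_g annihilates |K>: no population leaks out of H_0^K. *)
Lemma g_amp_top n t : g_amp n t (Ktop n) = 0.
Proof.
  rewrite g_amp_simpl, theta1_top.
  replace (3 * PI) with (PI + 2 * INR 1 * PI) by (simpl; ring).
  rewrite sin_period, sin_PI. field.
Qed.

Lemma m_amp_0 n t : m_amp n t 0 = 0.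
Proof. unfold m_amp. simpl INR. rewrite sqrt_0. ring. Qed.

Lemma e_amp_nbar n t : e_amp n t n = -1.
Proof.
  unfold e_amp. replace (theta1 n * sqrt (INR n + 1) / 2) with (PI / 2)
    by (rewrite theta1_nbar; field).
  rewrite cos_PI2, sin_PI2. ring.
Qed.

Lemma e_amp_top n t : e_amp n t (Ktop n) = -1.
Proof.
  unfold e_amp. replace (theta1 n * sqrt (INR (Ktop n) + 1) / 2) with (PI / 2 + PI)
    by (rewrite theta1_top; field).
  rewrite neg_cos, neg_sin, cos_PI2, sin_PI2. ring.
Qed.

Lemma kraus_completeness n t j : g_amp n t j ^ 2 + e_amp n t j ^ 2 + m_amp n t j ^ 2 = 1.
Proof.
  rewrite m_amp_simpl, g_amp_simpl. unfold e_amp.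
  set (a := theta1 n * sqrt (INR j + 1) / 2).
  replace (theta1 n * sqrt (INR j + 1)) with (2 * a) by (unfold a; field).
  set (x := t * sqrt (INR j) / 2).
  rewrite sin_2a.
  pose proof (sin2_cos2 a) as Ha. pose proof (sin2_cos2 x) as Hx. unfold Rsqr in *.
  replace (sin a ^ 2) with (1 - cos a ^ 2) by lra.
  replace (((1 + cos x) * (2 * sin a * cos a) / 2) ^ 2)
    with ((1 + cos x) ^ 2 * (sin a * sin a) * cos a ^ 2) by field.
  replace ((sin x * cos a) ^ 2) with ((sin x * sin x) * cos a ^ 2) by ring.
  replace (sin a * sin a) with (1 - cos a * cos a) by lra.
  replace (sin x * sin x) with (1 - cos x * cos x) by lra.
  ring.
Qed.

(** Below nbar, the upward amplitude g_j is nonzero: 1 + cos(theta2 sqrt j / 2)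
    vanishes only if sin(theta2 sqrt j) does, and theta1 sqrt(j+1) lies in (0, pi). *)
Lemma g_amp_nonzero n t j : (j < n)%nat -> sin_condition n t -> g_amp n t j <> 0.
Proof.
  intros Hj Hs. rewrite g_amp_simpl.
  assert (A : 1 + cos (t * sqrt (INR j) / 2) <> 0).
  { destruct j as [|j].
    - simpl INR. rewrite sqrt_0. replace (t * 0 / 2) with 0 by field. rewrite cos_0. lra.
    - set (y := t * sqrt (INR (S j)) / 2).
      assert (Hy : sin (2 * y) <> 0)
        by (unfold y; replace (2 * (t * sqrt (INR (S j)) / 2)) with (t * sqrt (INR (S j))) by field;
            apply Hs; lia).
      intros E. apply Hy. rewrite sin_2a.
      pose proof (sin2_cos2 y). unfold Rsqr in *.
      assert (sin y * sin y = 0) by nra.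
      assert (Z : sin y = 0) by nra. rewrite Z. ring. }
  assert (B : 0 < sin (theta1 n * sqrt (INR j + 1))).
  { rewrite theta1_mul. pose proof (sqrt_succ_pos n). pose proof (sqrt_succ_pos j).
    assert (sqrt (INR j + 1) < sqrt (INR n + 1)).
    { apply sqrt_lt_1; try (pose proof (pos_INR j); pose proof (pos_INR n); lra).
      apply lt_INR in Hj. lra. }
    assert (sqrt (INR j + 1) / sqrt (INR n + 1) < 1).
    { apply (Rmult_lt_reg_r (sqrt (INR n + 1))); [lra|]. field_simplify; lra. }
    pose proof PI_RGT_0.
    apply sin_gt_0; [apply Rmult_lt_0_compat; [lra|apply Rdiv_lt_0_compat; lra]|nra]. }
  intro E. assert (Hz : (1 + cos (t * sqrt (INR j) / 2)) * sin (theta1 n * sqrt (INR j + 1)) = 0)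
    by lra.
  apply Rmult_integral in Hz. destruct Hz; [contradiction | lra].
Qed.

(** Strictly between nbar and K, the downward amplitude m_J is nonzero:
    theta1 sqrt(J+1)/2 lies in (pi/2, 3 pi/2). *)
Lemma m_amp_nonzero n t J : (n < J)%nat -> (J < Ktop n)%nat -> sin_condition n t ->
  m_amp n t J <> 0.
Proof.
  intros H1 H2 Hs. rewrite m_amp_simpl.
  assert (A : sin (t * sqrt (INR J) / 2) <> 0).
  { intros E. apply (Hs J ltac:(lia)).
    replace (t * sqrt (INR J)) with (2 * (t * sqrt (INR J) / 2)) by field.
    rewrite sin_2a, E. ring. }
  assert (B : cos (theta1 n * sqrt (INR J + 1) / 2) < 0).
  { rewrite theta1_mul. pose proof (sqrt_succ_pos n). pose proof (sqrt_succ_pos J).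
    pose proof (pos_INR J). pose proof (pos_INR n).
    assert (sqrt (INR n + 1) < sqrt (INR J + 1)).
    { apply sqrt_lt_1; try lra. apply lt_INR in H1. lra. }
    assert (sqrt (INR J + 1) < 3 * sqrt (INR n + 1)).
    { rewrite <- sqrt_top. pose proof (pos_INR (Ktop n)).
      apply sqrt_lt_1; try lra. apply lt_INR in H2. lra. }
    set (r := sqrt (INR J + 1) / sqrt (INR n + 1)).
    assert (1 < r)
      by (unfold r; apply (Rmult_lt_reg_r (sqrt (INR n + 1))); [lra|]; field_simplify; lra).
    assert (r < 3)
      by (unfold r; apply (Rmult_lt_reg_r (sqrt (INR n + 1))); [lra|]; field_simplify; lra).
    pose proof PI_RGT_0.
    apply cos_lt_0; nra. }
  intro E. apply Rmult_integral in E. destruct E; [contradiction | lra].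
Qed.

Lemma Mg_entry n t j : Mg n t (S j) j = RtoC (g_amp n t j).
Proof. unfold Mg. rewrite Nat.eqb_refl. reflexivity. Qed.
Lemma Mg_off n t i k : i <> S k -> Mg n t i k = C0.
Proof. intros H. unfold Mg. apply Nat.eqb_neq in H. rewrite H. reflexivity. Qed.
Lemma Me_entry n t j : Me n t j j = RtoC (e_amp n t j).
Proof. unfold Me. rewrite Nat.eqb_refl. reflexivity. Qed.
Lemma Me_off n t i k : i <> k -> Me n t i k = C0.
Proof. intros H. unfold Me. apply Nat.eqb_neq in H. rewrite H. reflexivity. Qed.
Lemma Mm_entry n t p i : Mm n t p i (S i) = Cmul (Cexpi p) (RtoC (m_amp n t (S i))).
Proof. unfold Mm. rewrite Nat.eqb_refl. reflexivity. Qed.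
Lemma Mm_off n t p i k : k <> S i -> Mm n t p i k = C0.
Proof. intros H. unfold Mm. apply Nat.eqb_neq in H. rewrite H. reflexivity. Qed.

(** M_g sends H_0^K into itself since g_K = 0. *)
Lemma Mg_invariant n t i k : (k <= Ktop n)%nat -> (Ktop n < i)%nat -> Mg n t i k = C0.
Proof.
  intros Hk Hi. destruct (Nat.eq_dec i (S k)) as [->|Hne].
  - replace k with (Ktop n) by lia. rewrite Mg_entry, g_amp_top. reflexivity.
  - apply Mg_off; auto.
Qed.

Lemma sandwich_row0 K A rho i j :
  (forall k, (k <= K)%nat -> A i k = C0) -> sandwich K A rho i j = C0.
Proof.
  intros H. unfold sandwich. apply Csum_zero; intros k Hk. apply Csum_zero; intros l Hl.
  rewrite H by lia. Cring.
Qed.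

Lemma sandwich_col0 K A rho i j :
  (forall l, (l <= K)%nat -> A j l = C0) -> sandwich K A rho i j = C0.
Proof.
  intros H. unfold sandwich. apply Csum_zero; intros k Hk. apply Csum_zero; intros l Hl.
  rewrite (H l) by lia. Cring.
Qed.

Lemma sandwich_point K A rho i j k0 l0 : (k0 <= K)%nat -> (l0 <= K)%nat ->
  (forall k, k <> k0 -> A i k = C0) -> (forall l, l <> l0 -> A j l = C0) ->
  sandwich K A rho i j = Cmul (A i k0) (Cmul (rho k0 l0) (Cconj (A j l0))).
Proof.
  intros Hk Hl H1 H2. unfold sandwich.
  rewrite (Csum_single _ _ k0)
    by (try lia; intros k _ Hne; apply Csum_zero; intros l _; rewrite H1 by auto; Cring).
  rewrite (Csum_single _ _ l0); [reflexivity|lia|]. intros l _ Hne. rewrite H2 by auto. Cring.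
Qed.

Lemma phase_cancel p a b z :
  Cmul (Cmul (Cexpi p) (RtoC a)) (Cmul z (Cconj (Cmul (Cexpi p) (RtoC b)))) = scale (a * b) z.
Proof.
  pose proof (sin2_cos2 p) as H. unfold Rsqr in H.
  unfold Cexpi, scale. destruct z as [x y].
  apply C_ext; simpl.
  - transitivity (a * b * x * (sin p * sin p + cos p * cos p)); [ring | rewrite H; ring].
  - transitivity (a * b * y * (sin p * sin p + cos p * cos p)); [ring | rewrite H; ring].
Qed.

Lemma real_sandwich a b z : Cmul (RtoC a) (Cmul z (Cconj (RtoC b))) = scale (a * b) z.
Proof. unfold scale; Cring. Qed.

Definition gain_term (n : nat) (t : R) (rho : Op) (i j : nat) : C :=
  match i, j with
  | S i', S j' => scale (g_amp n t i' * g_amp n t j') (rho i' j')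
  | _, _ => C0
  end.

Lemma gain_term_pred n t rho i j : (1 <= i)%nat -> (1 <= j)%nat ->
  gain_term n t rho i j =
  scale (g_amp n t (i - 1) * g_amp n t (j - 1)) (rho (i - 1)%nat (j - 1)%nat).
Proof. intros Hi Hj. destruct i, j; try lia. simpl. rewrite !Nat.sub_0_r. reflexivity. Qed.

Lemma Phi_entry K n t p rho i j : supported_in K rho -> (i <= K)%nat -> (j <= K)%nat ->
  Phi K n t p rho i j =
  Cadd (Cadd (gain_term n t rho i j) (scale (e_amp n t i * e_amp n t j) (rho i j)))
       (scale (m_amp n t (S i) * m_amp n t (S j)) (rho (S i) (S j))).
Proof.
  intros Hs Hi Hj. unfold Phi. f_equal; [f_equal|].
  - unfold gain_term. destruct i as [|i'].
    + apply sandwich_row0. intros k _. apply Mg_off. lia.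
    + destruct j as [|j'].
      * apply sandwich_col0. intros l _. apply Mg_off. lia.
      * rewrite (sandwich_point K _ _ _ _ i' j') by (try lia; intros; apply Mg_off; lia).
        rewrite !Mg_entry. apply real_sandwich.
  - rewrite (sandwich_point K _ _ _ _ i j) by (try lia; intros; apply Me_off; lia).
    rewrite !Me_entry. apply real_sandwich.
  - destruct (Compare_dec.le_lt_dec (S i) K) as [Hi'|Hi'];
      [destruct (Compare_dec.le_lt_dec (S j) K) as [Hj'|Hj']|].
    + rewrite (sandwich_point K _ _ _ _ (S i) (S j)) by (try lia; intros; apply Mm_off; lia).
      rewrite !Mm_entry. apply phase_cancel.
    + rewrite sandwich_col0 by (intros; apply Mm_off; lia).
      rewrite Hs by lia. unfold scale; Cring.
    + rewrite sandwich_row0 by (intros; apply Mm_off; lia).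
      rewrite Hs by lia. unfold scale; Cring.
Qed.

Section KrausMap.
Variables (n : nat) (t p : R).
Notation K := (Ktop n).
Notation PhiK := (Phi K n t p).

Lemma Phi_supported rho : supported_in K (PhiK rho).
Proof.
  intros i j [Hi|Hj]; unfold Phi.
  - rewrite (sandwich_row0 K (Mg n t)) by (intros; apply Mg_invariant; auto).
    rewrite (sandwich_row0 K (Me n t)) by (intros; apply Me_off; lia).
    rewrite (sandwich_row0 K (Mm n t p)) by (intros; apply Mm_off; lia). Cring.
  - rewrite (sandwich_col0 K (Mg n t)) by (intros; apply Mg_invariant; auto).
    rewrite (sandwich_col0 K (Me n t)) by (intros; apply Me_off; lia).
    rewrite (sandwich_col0 K (Mm n t p)) by (intros; apply Mm_off; lia). Cring.
Qed.

Lemma Phi_hermitian rho : hermitian rho -> hermitian (PhiK rho).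
Proof.
  intros H i j. unfold Phi.
  rewrite !(sandwich_hermitian K _ rho H i j). Cring.
Qed.

Lemma Phi_psd rho : psd K rho -> psd K (PhiK rho).
Proof.
  intros H v. unfold Phi.
  rewrite (quad_add K (fun i j => Cadd (sandwich K (Mg n t) rho i j) (sandwich K (Me n t) rho i j))
                      (sandwich K (Mm n t p) rho)).
  rewrite (quad_add K (sandwich K (Mg n t) rho) (sandwich K (Me n t) rho)).
  unfold Cadd at 1 2. cbn [Cre].
  pose proof (psd_sandwich K (Mg n t) rho H v).
  pose proof (psd_sandwich K (Me n t) rho H v).
  pose proof (psd_sandwich K (Mm n t p) rho H v). lra.
Qed.

(** Trace preservation: each population rho_jj is redistributed with weights
    g_j^2, e_j^2, m_j^2 summing to 1, and nothing leaves H_0^K. *)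
Lemma Phi_trace rho : supported_in K rho ->
  Csum (S K) (fun i => PhiK rho i i) = Csum (S K) (fun i => rho i i).
Proof.
  intros Hs.
  rewrite (Csum_ext _ _ (fun i => Cadd (Cadd (gain_term n t rho i i)
             (scale (e_amp n t i * e_amp n t i) (rho i i)))
             (scale (m_amp n t (S i) * m_amp n t (S i)) (rho (S i) (S i)))))
    by (intros; apply Phi_entry; auto; lia).
  rewrite !Csum_add.
  set (h := fun a : nat -> R => fun i => scale (a i * a i) (rho i i)).
  assert (Hg : Csum (S K) (fun i => gain_term n t rho i i) = Csum (S K) (h (g_amp n t))).
  { rewrite Csum_shift.
    change (Csum (S K) (h (g_amp n t))) with (Cadd (Csum K (h (g_amp n t))) (h (g_amp n t) K)).
    replace (h (g_amp n t) K) with C0 by (unfold h; rewrite g_amp_top; unfold scale; Cring).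
    cbn [gain_term]. unfold h. apply C_ext; unfold Cadd; cbn [Cre Cim C0]; ring. }
  assert (Hm : Csum (S K) (fun i => h (m_amp n t) (S i)) = Csum (S K) (h (m_amp n t))).
  { transitivity (Csum (S (S K)) (h (m_amp n t))).
    - rewrite (Csum_shift (S K)).
      replace (h (m_amp n t) 0%nat) with C0 by (unfold h; rewrite m_amp_0; unfold scale; Cring).
      apply C_ext; unfold Cadd; cbn [Cre Cim C0]; ring.
    - change (Csum (S (S K)) (h (m_amp n t)))
        with (Cadd (Csum (S K) (h (m_amp n t))) (h (m_amp n t) (S K))).
      replace (h (m_amp n t) (S K)) with C0
        by (unfold h; rewrite (Hs (S K) (S K)) by lia; unfold scale; Cring).
      apply C_ext; unfold Cadd; cbn [Cre Cim C0]; ring. }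
  change (fun i => scale (m_amp n t (S i) * m_amp n t (S i)) (rho (S i) (S i)))
    with (fun i => h (m_amp n t) (S i)).
  rewrite Hg, Hm. unfold h. rewrite <- !Csum_add. apply Csum_ext. intros i _.
  pose proof (kraus_completeness n t i) as H. unfold scale. apply C_ext; simpl.
  - transitivity ((g_amp n t i ^ 2 + e_amp n t i ^ 2 + m_amp n t i ^ 2) * Cre (rho i i));
      [ring | rewrite H; ring].
  - transitivity ((g_amp n t i ^ 2 + e_amp n t i ^ 2 + m_amp n t i ^ 2) * Cim (rho i i));
      [ring | rewrite H; ring].
Qed.

Lemma Phi_density rho : density_on K rho -> density_on K (PhiK rho).
Proof.
  intros D. split; [|split; [|split]].
  - apply Phi_supported.
  - apply Phi_hermitian, (density_hermitian K _ D).
  - apply Phi_psd, (density_psd K _ D).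
  - rewrite Phi_trace by apply (density_supported K _ D). apply D.
Qed.

End KrausMap.

Definition two_level_op (a b : nat) (A B : R) (z : C) : Op := fun i j =>
  if Nat.eqb i a then (if Nat.eqb j a then mkC A 0 else if Nat.eqb j b then z else C0)
  else if Nat.eqb i b then (if Nat.eqb j a then Cconj z else if Nat.eqb j b then mkC B 0 else C0)
  else C0.

Lemma two_level_op_support a b A B z i j : two_level_op a b A B z i j <> C0 ->
  (i = a \/ i = b) /\ (j = a \/ j = b).
Proof.
  unfold two_level_op. intros Hne.
  destruct (Nat.eqb_spec i a); destruct (Nat.eqb_spec j a); destruct (Nat.eqb_spec i b);
    destruct (Nat.eqb_spec j b); try tauto; exfalso; apply Hne; reflexivity.
Qed.

(** ** The dynamics rho_(k+1) = Phi(rho_k) *)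

Section Dynamics.
Variables (n : nat) (t p : R) (rho0 : Op).
Hypothesis Hn : (1 <= n)%nat.
Hypothesis Hsin : sin_condition n t.
Hypothesis Hrho0 : density_on (Ktop n) rho0.
Notation K := (Ktop n).

Definition state (k : nat) : Op := Nat.iter k (Phi K n t p) rho0.

Definition pop (j k : nat) : R := Cre (state k j j).

Lemma state_density k : density_on K (state k).
Proof. induction k as [|k IH]; [exact Hrho0|]. apply Phi_density. exact IH. Qed.

Lemma pop_nonneg j k : 0 <= pop j k.
Proof. apply (density_diag_nonneg K _ (state_density k)). Qed.

Lemma pop_le1 j k : pop j k <= 1.
Proof. apply (density_diag_le1 K _ (state_density k)). Qed.

Lemma pop_step j k : (1 <= j <= K)%nat ->
  pop j (S k) = g_amp n t (j - 1) ^ 2 * pop (j - 1) k + e_amp n t j ^ 2 * pop j k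
                + m_amp n t (S j) ^ 2 * pop (S j) k.
Proof.
  intros Hj. unfold pop. change (state (S k)) with (Phi K n t p (state k)).
  rewrite Phi_entry by (auto; try lia; apply (density_supported K _ (state_density k))).
  rewrite gain_term_pred by lia. simpl. ring.
Qed.

Lemma pop_from_below j k : (1 <= j <= K)%nat ->
  g_amp n t (j - 1) ^ 2 * pop (j - 1) k <= pop j (S k).
Proof.
  intros Hj. rewrite pop_step by lia.
  pose proof (pop_nonneg j k). pose proof (pop_nonneg (S j) k). nra.
Qed.

Lemma pop_from_above j k : (1 <= j <= K)%nat ->
  m_amp n t (S j) ^ 2 * pop (S j) k <= pop j (S k).
Proof.
  intros Hj. rewrite pop_step by lia.
  pose proof (pop_nonneg (j - 1) k). pose proof (pop_nonneg j k). nra.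
Qed.

(** Since e_nbar = -1, level nbar keeps all its population and gains the inflow. *)
Lemma pop_nbar_step k : pop n (S k) =
  pop n k + g_amp n t (n - 1) ^ 2 * pop (n - 1) k + m_amp n t (S n) ^ 2 * pop (S n) k.
Proof. rewrite pop_step by lia. rewrite e_amp_nbar. ring. Qed.

(** Likewise e_K = -1, so the population of |K> is nondecreasing. *)
Lemma pop_top_growing : Un_growing (pop K).
Proof.
  intros k. rewrite (pop_step K) by lia. rewrite e_amp_top.
  pose proof (pop_nonneg (K - 1) k). pose proof (pop_nonneg (S K) k). nra.
Qed.

Lemma pop_nbar_growing : Un_growing (pop n).
Proof.
  intros k. rewrite pop_nbar_step.
  pose proof (pop_nonneg (n - 1) k). pose proof (pop_nonneg (S n) k). nra.
Qed.

(** The inflow into |nbar> telescopes and is bounded by 1, so the populations of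
    the two neighbours of nbar are summable in time. *)
Lemma nbar_neighbours_summable : summable (pop (n - 1)) /\ summable (pop (S n)).
Proof.
  set (a := g_amp n t (n - 1) ^ 2). set (b := m_amp n t (S n) ^ 2).
  assert (Ha : 0 < a) by (pose proof (g_amp_nonzero n t (n - 1) ltac:(lia) Hsin); unfold a; nra).
  assert (Hb : 0 < b) by (pose proof (m_amp_nonzero n t (S n) ltac:(lia) ltac:(lia) Hsin);
                          unfold b; nra).
  assert (Tel : forall N, psum N (fun k => a * pop (n - 1) k + b * pop (S n) k) = pop n N - pop n O).
  { induction N as [|N IH]; simpl; [ring|]. rewrite IH, pop_nbar_step. fold a b. ring. }
  assert (Bd : forall N, a * psum N (pop (n - 1)) + b * psum N (pop (S n)) <= 1).
  { intros N. rewrite <- psum_lin, Tel. pose proof (pop_le1 n N). pose proof (pop_nonneg n O). lra. }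
  split.
  - exists (1 / a). intros N. apply (Rmult_le_reg_l a); [lra|].
    replace (a * (1 / a)) with 1 by (field; lra).
    pose proof (Bd N). pose proof (psum_nonneg N (pop (S n)) (pop_nonneg (S n))). nra.
  - exists (1 / b). intros N. apply (Rmult_le_reg_l b); [lra|].
    replace (b * (1 / b)) with 1 by (field; lra).
    pose proof (Bd N). pose proof (psum_nonneg N (pop (n - 1)) (pop_nonneg (n - 1))). nra.
Qed.

(** Summability propagates downwards from nbar-1, since g_j <> 0 for j < nbar. *)
Lemma pop_summable_below d : (d < n)%nat -> summable (pop (n - 1 - d)).
Proof.
  induction d as [|d IH]; intros Hd.
  - rewrite Nat.sub_0_r. apply nbar_neighbours_summable.
  - set (j := (n - 1 - d)%nat). replace (n - 1 - S d)%nat with (j - 1)%nat by (unfold j; lia).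
    apply (summable_transfer _ (pop j) (g_amp n t (j - 1) ^ 2)).
    + pose proof (g_amp_nonzero n t (j - 1) ltac:(unfold j; lia) Hsin). nra.
    + apply pop_nonneg.
    + intros k. apply pop_from_below. unfold j. lia.
    + apply IH. lia.
Qed.

(** Summability propagates upwards from nbar+1, since m_J <> 0 for nbar < J < K. *)
Lemma pop_summable_above d : (n + 1 + d < K)%nat -> summable (pop (n + 1 + d)).
Proof.
  induction d as [|d IH]; intros Hd.
  - replace (n + 1 + 0)%nat with (S n) by lia. apply nbar_neighbours_summable.
  - set (j := (n + 1 + d)%nat). replace (n + 1 + S d)%nat with (S j) by (unfold j; lia).
    apply (summable_transfer _ (pop j) (m_amp n t (S j) ^ 2)).
    + pose proof (m_amp_nonzero n t (S j) ltac:(unfold j; lia) ltac:(unfold j; lia) Hsin). nra.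
    + apply pop_nonneg.
    + intros k. apply pop_from_above. unfold j. lia.
    + apply IH. lia.
Qed.

Definition transient (j : nat) : Prop := (j <= K)%nat /\ j <> n /\ j <> K.

Lemma pop_transient_summable j : transient j -> summable (pop j).
Proof.
  intros (H1 & H2 & H3). destruct (Compare_dec.lt_dec j n).
  - replace j with (n - 1 - (n - 1 - j))%nat by lia. apply pop_summable_below. lia.
  - replace j with (n + 1 + (j - n - 1))%nat by lia. apply pop_summable_above. lia.
Qed.

Lemma pop_transient_vanishes j : transient j -> Un_cv (pop j) 0.
Proof. intros Hj. apply summable_cv0; [apply pop_nonneg | apply pop_transient_summable; auto]. Qed.

Lemma state_diag_real j k : Cim (state k j j) = 0.
Proof. apply (density_diag_real K _ (state_density k)). Qed.

Lemma coherence_transient_row i j : i <> j -> transient i -> Ccv (fun k => state k i j) C0.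
Proof.
  intros Hij Hi. pose proof (pop_transient_vanishes i Hi) as Hq.
  split; simpl; apply (squeeze_by_vanishing _ (pop i) Hq); intros k s Hs;
  destruct (density_coherence_bound K (state k) (state_density k) i j s Hij Hs) as [A B];
  pose proof (pop_le1 j k); pose proof (pop_nonneg j k); unfold pop in *;
  pose proof (Rinv_0_lt_compat s Hs); unfold Rdiv in A, B; nra.
Qed.

Lemma entry_outside_vanishes i j : ~ ((i = n \/ i = K) /\ (j = n \/ j = K)) ->
  Ccv (fun k => state k i j) C0.
Proof.
  intros H.
  destruct (Compare_dec.le_lt_dec i K) as [Hi|Hi];
    [destruct (Compare_dec.le_lt_dec j K) as [Hj|Hj]|].
  2,3: eapply Ccv_ext; [|apply Ccv_const]; intros k; symmetry;
       apply (density_supported K _ (state_density k)); lia.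
  destruct (Nat.eq_dec i j) as [->|Hij].
  - split; simpl.
    + apply pop_transient_vanishes. unfold transient. tauto.
    + eapply Un_cv_ext; [|apply Un_cv_const]. intros k. symmetry. apply state_diag_real.
  - assert (Htr : transient i \/ transient j) by (unfold transient; lia).
    destruct Htr as [Ti|Tj].
    + apply coherence_transient_row; auto.
    + replace C0 with (Cconj C0) by Cring.
      apply (Ccv_ext (fun k => Cconj (state k j i))).
      { intros k. symmetry. apply (density_hermitian K _ (state_density k)). }
      apply Ccv_conj, coherence_transient_row; auto.
Qed.

Lemma coherence_attractor_step k : state (S k) n K =
  Cadd (state k n K) (scale (g_amp n t (n - 1) * g_amp n t (K - 1)) (state k (n - 1)%nat (K - 1)%nat)).
Proof.
  change (state (S k)) with (Phi K n t p (state k)).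
  rewrite Phi_entry by (auto; try lia; apply (density_supported K _ (state_density k))).
  rewrite e_amp_nbar, e_amp_top.
  rewrite (density_supported K _ (state_density k) (S n) (S K)) by lia.
  rewrite gain_term_pred by lia. unfold scale. apply C_ext; simpl; ring.
Qed.

(** The increments of <nbar|rho_k|K> are bounded by the summable populations of
    |nbar-1> and |K-1>, so this coherence converges. *)
Lemma coherence_attractor_converges : exists z, Ccv (fun k => state k n K) z.
Proof.
  set (w := fun k => / 2 * pop (n - 1) k + / 2 * pop (K - 1) k).
  assert (Hw : summable w).
  { apply summable_comb; try lra; apply pop_transient_summable; unfold transient; lia. }
  assert (Hb : forall k, Rabs (Cre (state k (n - 1)%nat (K - 1)%nat)) <= w k /\
                         Rabs (Cim (state k (n - 1)%nat (K - 1)%nat)) <= w k).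
  { intros k. destruct (density_coherence_bound K (state k) (state_density k)
                          (n - 1) (K - 1) 1 ltac:(lia) ltac:(lra)) as [A B].
    unfold w, pop. unfold Rdiv in A, B. rewrite Rinv_1 in A, B. split; lra. }
  set (c := g_amp n t (n - 1) * g_amp n t (K - 1)).
  destruct (dominated_increments_cv (fun k => Cre (state k n K))
              (fun k => Cre (state k (n - 1)%nat (K - 1)%nat)) w c) as [lr Hr];
  [intros k; rewrite coherence_attractor_step; reflexivity | apply Hb | exact Hw |].
  destruct (dominated_increments_cv (fun k => Cim (state k n K))
              (fun k => Cim (state k (n - 1)%nat (K - 1)%nat)) w c) as [li Hi];
  [intros k; rewrite coherence_attractor_step; reflexivity | apply Hb | exact Hw |].
  exists (mkC lr li). split; assumption.
Qed.

(** The populations of |nbar> and |K> converge, being nondecreasing and at most 1. *)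
Lemma pop_converges j : Un_growing (pop j) -> exists l, Un_cv (pop j) l.
Proof.
  intros Hg. destruct (growing_cv (pop j) Hg) as [l Hl]; [|exists l; exact Hl].
  exists 1. intros z [i ->]. apply pop_le1.
Qed.

Lemma diag_converges j l : Un_cv (pop j) l -> Ccv (fun k => state k j j) (mkC l 0).
Proof.
  intros H. split; [exact H|]. simpl.
  eapply Un_cv_ext; [|apply Un_cv_const]. intros k. symmetry. apply state_diag_real.
Qed.

Lemma state_converges : exists rinf : Op,
  density_on K rinf
  /\ (forall i j, rinf i j <> C0 -> (i = n \/ i = K) /\ (j = n \/ j = K))
  /\ op_converges state rinf.
Proof.
  destruct (pop_converges n pop_nbar_growing) as [A HA].
  destruct (pop_converges K pop_top_growing) as [B HB].
  destruct coherence_attractor_converges as [z Hz].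
  set (rinf := two_level_op n K A B z).
  assert (Hcv : forall i j, Ccv (fun k => state k i j) (rinf i j)).
  { intros i j. unfold rinf, two_level_op.
    destruct (Nat.eqb_spec i n) as [->|Hin]; [|destruct (Nat.eqb_spec i K) as [->|HiK]].
    - destruct (Nat.eqb_spec j n) as [->|Hjn]; [apply diag_converges; exact HA|].
      destruct (Nat.eqb_spec j K) as [->|HjK]; [exact Hz|].
      apply entry_outside_vanishes. lia.
    - destruct (Nat.eqb_spec j n) as [->|Hjn].
      + apply (Ccv_ext (fun k => Cconj (state k n K))); [|apply Ccv_conj, Hz].
        intros k. symmetry. apply (density_hermitian K _ (state_density k)).
      + destruct (Nat.eqb_spec j K) as [->|HjK]; [apply diag_converges; exact HB|].
        apply entry_outside_vanishes. lia.
    - apply entry_outside_vanishes. lia. }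
  exists rinf. split; [|split].
  - apply (density_on_limit K state rinf state_density Hcv).
  - apply two_level_op_support.
  - exact Hcv.
Qed.

End Dynamics.

Theorem mainTheorem3 (nbar : nat) (theta2 phi : R) :
  (1 <= nbar)%nat ->
  0 < theta2 ->
  (forall n : nat, (1 <= n <= 9 * nbar + 8)%nat -> sin (theta2 * sqrt (INR n)) <> 0) ->
  (invariant_sub (9 * nbar + 8) (Mg nbar theta2)
   /\ invariant_sub (9 * nbar + 8) (Me nbar theta2)
   /\ invariant_sub (9 * nbar + 8) (Mm nbar theta2 phi))
  /\ (forall rho0 : Op, density_on (9 * nbar + 8) rho0 ->
        exists rinf : Op,
          density_on (9 * nbar + 8) rinf
          /\ (forall i j, rinf i j <> C0 ->
                (i = nbar \/ i = (9 * nbar + 8)%nat) /\ (j = nbar \/ j = (9 * nbar + 8)%nat))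
          /\ op_converges
               (fun k => Nat.iter k (Phi (9 * nbar + 8) nbar theta2 phi) rho0) rinf).
Proof.
  intros Hn _ Hsin. split; [split; [|split]|].
  - intros i j Hj Hi. apply Mg_invariant; lia.
  - intros i j Hj Hi. apply Me_off; lia.
  - intros i j Hj Hi. apply Mm_off; lia.
  - intros rho0 Hrho0. exact (state_converges nbar theta2 phi rho0 Hn Hsin Hrho0).
Qed.
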